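(* Suppose that $\gamma_*>0$ and $P[\mu_1,\mu_2]$ is a nonsingular matrix. Then the two $n\times 2$ matrices $U(\gamma_* )=[u_1(\gamma_* )\ u_2(\gamma_* )]$ and $V(\gamma_* )=[v_1(\gamma_* )\ v_2(\gamma_* )]$ are full rank.
   Context: Let $P(\lambda)=\sum_{j=0}^m A_j\lambda^j$ be an $n\times n$ matrix polynomial with $\det A_m\neq0$, let $\mu_1\neq\mu_2$ be complex numbers, $P[\mu_1,\mu_2]=\frac{P(\mu_1)-P(\mu_2)}{\mu_1-\mu_2}$, and $F[P(\mu_1,\mu_2);\gamma]=\begin{bmatrix} P(\mu_1) & 0\\ \gamma P[\mu_1,\mu_2] & P(\mu_2)\end{bmatrix}$. Let $\gamma_*$ be a point where $s_{2n-1}(F[P(\mu_1,\mu_2);\gamma])$ attains its maximum $s_*>0$ over $\gamma\ge0$. Let $\begin{bmatrix} u_1(\gamma_* )\\ u_2(\gamma_* )\end{bmatrix},\begin{bmatrix} v_1(\gamma_* )\\ v_2(\gamma_* )\end{bmatrix}$ ($u_k,v_k\in\mathbb{C}^n$) be a pair of left and right singular vectors of $s_*$ chosen such that $u_2(\gamma_* )^*P[\mu_1,\mu_2]v_1(\gamma_* )=0$, $u_2(\gamma_* )^*u_1(\gamma_* )=v_2(\gamma_* )^*v_1(\gamma_* )$, and $U(\gamma_* )^*U(\gamma_* )=V(\gamma_* )^*V(\gamma_* )$ (such a pair exists). *)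

From HB Require Import structures.
From mathcomp Require Import all_boot all_order all_algebra.
From mathcomp Require Import reals.
From mathcomp Require Import complex.
Set Implicit Arguments. Unset Strict Implicit. Unset Printing Implicit Defensive.
Import Order.TTheory GRing.Theory Num.Theory.
Local Open Scope ring_scope.
Local Open Scope complex_scope.

Section Defs.
Variable R : realType.
Local Notation C := R[i].

Definition ctr (p q : nat) (M : 'M[C]_(p, q)) : 'M[C]_(q, p) :=
  map_mx (@conjc _) M^T.

Definition unitary (N : nat) (X : 'M[C]_N) : Prop := ctr X *m X = 1%:M.

(* is_sv A k s : s is the (k+1)-th largest singular value of A (0-based index k),
   i.e. s = d k in some singular value decomposition A = X diag(d) Y^* with
   X, Y unitary and d nonnegative and nonincreasing. *)
Definition is_sv (N : nat) (A : 'M[C]_N) (k : nat) (s : R) : Prop :=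
  (k < N)%N /\
  exists (X Y : 'M[C]_N) (d : nat -> R),
    [/\ unitary X /\ unitary Y,
        (forall j, (j < N)%N -> 0 <= d j),
        (forall j l, (j <= l < N)%N -> d l <= d j),
        A = X *m diag_mx (\row_(j < N) (d j)%:C) *m ctr Y
      & s = d k].

Definition mpoly_eval (n m : nat) (A : nat -> 'M[C]_n) (lam : C) : 'M[C]_n :=
  \sum_(j < m.+1) (lam ^+ j) *: A j.

Definition mpoly_dd (n m : nat) (A : nat -> 'M[C]_n) (mu1 mu2 : C) : 'M[C]_n :=
  (mu1 - mu2)^-1 *: (mpoly_eval m A mu1 - mpoly_eval m A mu2).

Definition Fmat (n m : nat) (A : nat -> 'M[C]_n) (mu1 mu2 : C) (g : R)
  : 'M[C]_(n + n) :=
  block_mx (mpoly_eval m A mu1) 0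
           (g%:C *: mpoly_dd m A mu1 mu2) (mpoly_eval m A mu2).

End Defs.

(* Write [F v = s u] and [F^* u = s v] blockwise, with [P_k = P(mu_k)] and
   [D = P[mu1,mu2]], so that [P1 - P2 = (mu1 - mu2) D].  Since U^*U = V^*V, a
   relation [a u1 + b u2 = 0] holds iff [a v1 + b v2 = 0].  Combining the four
   block equations along such a relation gives
   [(b gamma + a (mu1 - mu2)) D v1 = 0] and [(a gamma - b conj(mu1 - mu2)) D^* u2 = 0];
   as D is invertible and v1, u2 are nonzero, both coefficients vanish, and for
   [gamma > 0] this linear system in (a, b) has determinant
   [-(gamma^2 + |mu1 - mu2|^2) <> 0]. *)
From HB Require Import structures.
From mathcomp Require Import all_boot all_order all_algebra.
From mathcomp Require Import reals.
From mathcomp Require Import complex.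
From mathcomp Require Import ring.
Import Order.TTheory GRing.Theory Num.Theory.
Local Open Scope ring_scope.
Local Open Scope complex_scope.
Set Implicit Arguments. Unset Strict Implicit.

Section ConjugateTranspose.
Variable R : realType.
Local Notation C := R[i].

Lemma ctrM p q r (A : 'M[C]_(p, q)) (B : 'M[C]_(q, r)) :
  ctr (A *m B) = ctr B *m ctr A.
Proof. by rewrite /ctr trmx_mul map_mxM. Qed.

Lemma ctrZ p q a (A : 'M[C]_(p, q)) : ctr (a *: A) = conjc a *: ctr A.
Proof. by rewrite /ctr linearZ /= map_mxZ. Qed.

Lemma ctrB p q (A B : 'M[C]_(p, q)) : ctr (A - B) = ctr A - ctr B.
Proof. by rewrite /ctr linearB /= map_mxB. Qed.

Lemma ctr0 p q : ctr (0 : 'M[C]_(p, q)) = 0.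
Proof. by apply/matrixP=> i j; rewrite /ctr !mxE conjc0. Qed.

Lemma ctr_col_mx p1 p2 q (A : 'M[C]_(p1, q)) (B : 'M[C]_(p2, q)) :
  ctr (col_mx A B) = row_mx (ctr A) (ctr B).
Proof. by rewrite /ctr tr_col_mx map_row_mx. Qed.

Lemma ctr_row_mx p q1 q2 (A : 'M[C]_(p, q1)) (B : 'M[C]_(p, q2)) :
  ctr (row_mx A B) = col_mx (ctr A) (ctr B).
Proof. by rewrite /ctr tr_row_mx map_col_mx. Qed.

Lemma ctr_block_mx p1 p2 q1 q2 (A : 'M[C]_(p1, q1)) (B : 'M[C]_(p1, q2))
  (D : 'M[C]_(p2, q1)) (E : 'M[C]_(p2, q2)) :
  ctr (block_mx A B D E) = block_mx (ctr A) (ctr D) (ctr B) (ctr E).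
Proof. by rewrite /ctr tr_block_mx map_block_mx. Qed.

Lemma unitmx_ctr p (D : 'M[C]_p) : (ctr D \in unitmx) = (D \in unitmx).
Proof. by rewrite !unitmxE !unitfE /ctr det_map_mx det_tr conjc_eq0. Qed.

Lemma ctr_mul_self_eq0 p (x : 'cV[C]_p) : ctr x *m x = 0 -> x = 0.
Proof.
move=> /matrixP /(_ 0 0); rewrite !mxE => x2_eq0.
have sum_eq0 : \sum_(i < p) `|x i 0| ^+ 2 = 0.
  by rewrite -[RHS]x2_eq0; apply: eq_bigr => i _; rewrite !mxE sqr_normc mulrC.
apply/matrixP => i j; rewrite (ord1 j) mxE.
have ge0 i' : true -> 0 <= `|x i' 0| ^+ 2 by rewrite exprn_ge0.
have /eqP := @psumr_eq0P _ _ xpredT _ ge0 sum_eq0 i isT.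
by rewrite sqrf_eq0 normr_eq0 => /eqP.
Qed.

Lemma gram_eq_mulmx_eq0 p q (X Y : 'M[C]_(p, q)) (c : 'cV[C]_q) :
  ctr X *m X = ctr Y *m Y -> X *m c = 0 -> Y *m c = 0.
Proof.
move=> XY Xc; apply: ctr_mul_self_eq0.
by rewrite ctrM mulmxA -(mulmxA (ctr c)) -XY mulmxA -mulmxA -ctrM Xc mulmx0.
Qed.

End ConjugateTranspose.

Lemma mxrank_inj_cols (F : fieldType) p q (X : 'M[F]_(p, q)) :
  (forall c : 'cV[F]_q, X *m c = 0 -> c = 0) -> \rank X = q.
Proof.
move=> injX; rewrite -mxrank_tr; apply/eqP; apply: inj_row_free => v vX0.
apply: trmx_inj; rewrite trmx0; apply: injX.
by rewrite -[X]trmxK -trmx_mul vX0 trmx0.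
Qed.

Lemma mul_row_mx2 (F : fieldType) p (x1 x2 : 'cV[F]_p) (c : 'cV[F]_(1 + 1)) :
  row_mx x1 x2 *m c = usubmx c 0 0 *: x1 + dsubmx c 0 0 *: x2.
Proof.
rewrite -{1}[c]vsubmxK mul_row_col.
by rewrite {1}[usubmx c]mx11_scalar {1}[dsubmx c]mx11_scalar !mul_mx_scalar.
Qed.

Lemma unitmx_mul_eq0 (F : comUnitRingType) p (M : 'M[F]_p) (x : 'cV[F]_p) :
  M \in unitmx -> M *m x = 0 -> x = 0.
Proof. by move=> M_unit Mx0; rewrite -(mulKmx M_unit x) Mx0 mulmx0. Qed.

Lemma cV2_eq0 (F : fieldType) (c : 'cV[F]_(1 + 1)) :
  usubmx c 0 0 = 0 -> dsubmx c 0 0 = 0 -> c = 0.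
Proof.
move=> c1 c2; rewrite -[c]vsubmxK [usubmx c]mx11_scalar [dsubmx c]mx11_scalar.
by rewrite c1 c2 !raddf0 col_mx0.
Qed.

(* The determinant of this system in (a, b) is [-(g^2 + |d|^2)]. *)
Lemma coefs_eq0 (R : realType) (g : R) (d a b : R[i]) : 0 < g ->
  b * g%:C + a * d = 0 -> a * g%:C - b * conjc d = 0 -> a = 0 /\ b = 0.
Proof.
move=> g_gt0 eq_v eq_u.
have gC_neq0 : g%:C != 0 by rewrite eq_complex /= eqxx andbT gt_eqF.
have det_gt0 : 0 < g%:C ^+ 2 + d * conjc d.
  by rewrite ltr_wpDr ?mulcJ_ge0 // exprn_gt0 // ltcR.
have a_0 : a = 0.
  have : a * (g%:C ^+ 2 + d * conjc d)
      = g%:C * (a * g%:C - b * conjc d) + conjc d * (b * g%:C + a * d) by ring.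
  rewrite eq_u eq_v !mulr0 addr0 => /eqP.
  by rewrite mulf_eq0 (gt_eqF det_gt0) orbF => /eqP.
split=> //; move/eqP: eq_v; rewrite a_0 mul0r addr0 mulf_eq0 (negPf gC_neq0) orbF.
by move/eqP.
Qed.

Section SingularVectorPair.
Variable R : realType.
Local Notation C := R[i].
Variables (n : nat) (P1 P2 D : 'M[C]_n) (d : C) (g s : R).
Variables (u1 u2 v1 v2 : 'cV[C]_n).
Hypotheses (dD : P1 - P2 = d *: D) (D_unit : D \in unitmx) (g_gt0 : 0 < g).
Hypotheses (Ev1 : P1 *m v1 = s%:C *: u1)
  (Ev2 : g%:C *: (D *m v1) + P2 *m v2 = s%:C *: u2)
  (Eu1 : ctr P1 *m u1 + g%:C *: (ctr D *m u2) = s%:C *: v1)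
  (Eu2 : ctr P2 *m u2 = s%:C *: v2).
Hypotheses (norm1 : ctr u1 *m u1 = ctr v1 *m v1)
  (norm2 : ctr u2 *m u2 = ctr v2 *m v2)
  (normU : ctr u1 *m u1 + ctr u2 *m u2 = 1%:M).

Let scaled_unit_eq0 (M : 'M[C]_n) (x : 'cV[C]_n) :
  M \in unitmx -> g%:C *: (M *m x) = 0 -> x = 0.
Proof.
move=> M_unit /eqP; rewrite scaler_eq0 eq_complex /= eqxx andbT gt_eqF //=.
by move/eqP; apply: unitmx_mul_eq0.
Qed.

Let scalerC (x y : C) (w : 'cV[C]_n) : x *: (y *: w) = y *: (x *: w).
Proof. by rewrite !scalerA mulrC. Qed.

Lemma v1_neq0 : v1 != 0.
Proof.
apply/eqP => v1_0; have u1_0 : u1 = 0.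
  by apply: ctr_mul_self_eq0; rewrite norm1 v1_0 mulmx0.
have u2_0 : u2 = 0.
  apply: (@scaled_unit_eq0 (ctr D)); first by rewrite unitmx_ctr.
  by move: Eu1; rewrite u1_0 v1_0 mulmx0 scaler0 add0r.
move: normU; rewrite u1_0 u2_0 !mulmx0 addr0 => /matrixP /(_ 0 0).
by rewrite !mxE /= => /eqP; rewrite eq_sym oner_eq0.
Qed.

Lemma u2_neq0 : u2 != 0.
Proof.
apply/eqP => u2_0; have v2_0 : v2 = 0.
  by apply: ctr_mul_self_eq0; rewrite -norm2 u2_0 mulmx0.
have v1_0 : v1 = 0.
  apply: (scaled_unit_eq0 D_unit).
  by move: Ev2; rewrite u2_0 v2_0 !mulmx0 scaler0 addr0.
by move: v1_neq0; rewrite v1_0 eqxx.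
Qed.

Variables a b : C.
Hypotheses (rel_u : a *: u1 + b *: u2 = 0) (rel_v : a *: v1 + b *: v2 = 0).

Lemma coef_v1_eq0 : b * g%:C + a * d = 0.
Proof.
have gDv1 : g%:C *: (D *m v1) = s%:C *: u2 - P2 *m v2 by rewrite -Ev2 addrK.
have dDv1 : d *: (D *m v1) = s%:C *: u1 - P2 *m v1.
  by rewrite scalemxAl -dD mulmxBl Ev1.
have : (b * g%:C + a * d) *: (D *m v1)
    = s%:C *: (a *: u1 + b *: u2) - P2 *m (a *: v1 + b *: v2).
  rewrite scalerDl -!scalerA gDv1 dDv1 addrC !scalerBr addrACA -opprD.
  by rewrite mulmxDr -!scalemxAr scalerDr !(scalerC s%:C).
rewrite rel_u rel_v scaler0 mulmx0 subrr => /eqP.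
rewrite scaler_eq0 => /orP[/eqP // | /eqP /(unitmx_mul_eq0 D_unit) v1_0].
by move: v1_neq0; rewrite v1_0 eqxx.
Qed.

Lemma coef_u2_eq0 : a * g%:C - b * conjc d = 0.
Proof.
have gDu2 : g%:C *: (ctr D *m u2) = s%:C *: v1 - ctr P1 *m u1.
  by rewrite -Eu1 addrAC subrr add0r.
have dDu2 : conjc d *: (ctr D *m u2) = ctr P1 *m u2 - s%:C *: v2.
  by rewrite scalemxAl -ctrZ -dD ctrB mulmxBl Eu2.
have : (a * g%:C - b * conjc d) *: (ctr D *m u2)
    = s%:C *: (a *: v1 + b *: v2) - ctr P1 *m (a *: u1 + b *: u2).
  rewrite scalerBl -!scalerA gDu2 dDu2 !scalerBr opprB addrACA -opprD.
  by rewrite mulmxDr -!scalemxAr scalerDr !(scalerC s%:C).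
rewrite rel_u rel_v scaler0 mulmx0 subrr => /eqP.
have ctrD_unit : ctr D \in unitmx by rewrite unitmx_ctr.
rewrite scaler_eq0 => /orP[/eqP // | /eqP /(unitmx_mul_eq0 ctrD_unit) u2_0].
by move: u2_neq0; rewrite u2_0 eqxx.
Qed.

Lemma pair_relation_trivial : a = 0 /\ b = 0.
Proof. exact: coefs_eq0 g_gt0 coef_v1_eq0 coef_u2_eq0. Qed.

End SingularVectorPair.

Theorem lemma5 (R : realType) (n m : nat) (A : nat -> 'M[R[i]]_n)
  (mu1 mu2 : R[i]) (gs ss : R) (u1 u2 v1 v2 : 'cV[R[i]]_n) :
  (0 < n)%N ->
  \det (A m) != 0 ->
  mu1 != mu2 ->
  (* gamma_* >= 0 maximizes s_{2n-1}(F(gamma)) over gamma >= 0, max = s_* > 0 *)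
  0 <= gs ->
  is_sv (Fmat m A mu1 mu2 gs) (n + n).-2 ss ->
  (forall g s, 0 <= g -> is_sv (Fmat m A mu1 mu2 g) (n + n).-2 s -> s <= ss) ->
  0 < ss ->
  (* [u1;u2], [v1;v2] are a pair of (unit) left/right singular vectors for s_* *)
  Fmat m A mu1 mu2 gs *m col_mx v1 v2 = ss%:C *: col_mx u1 u2 ->
  ctr (Fmat m A mu1 mu2 gs) *m col_mx u1 u2 = ss%:C *: col_mx v1 v2 ->
  ctr (col_mx u1 u2) *m col_mx u1 u2 = 1%:M ->
  ctr (col_mx v1 v2) *m col_mx v1 v2 = 1%:M ->
  (* normalization conditions *)
  ctr u2 *m mpoly_dd m A mu1 mu2 *m v1 = 0 ->
  ctr u2 *m u1 = ctr v2 *m v1 ->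
  ctr (row_mx u1 u2) *m row_mx u1 u2 = ctr (row_mx v1 v2) *m row_mx v1 v2 ->
  (* hypotheses of the lemma *)
  0 < gs ->
  \det (mpoly_dd m A mu1 mu2) != 0 ->
  \rank (row_mx u1 u2) = 2%N /\ \rank (row_mx v1 v2) = 2%N.
Proof.
move=> _ _ mu12 _ _ _ _ Fv Fu normU _ _ _ gramUV gs_gt0 dd_det.
have dD : mpoly_eval m A mu1 - mpoly_eval m A mu2
    = (mu1 - mu2) *: mpoly_dd m A mu1 mu2.
  by rewrite /mpoly_dd scalerA divff ?subr_eq0 // scale1r.
have dd_unit : mpoly_dd m A mu1 mu2 \in unitmx by rewrite unitmxE unitfE.
move: Fv; rewrite /Fmat mul_block_col mul0mx addr0 -scalemxAl scale_col_mx.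
case/eq_col_mx => Ev1 Ev2.
move: Fu; rewrite /Fmat ctr_block_mx ctr0 mul_block_col mul0mx add0r ctrZ.
rewrite conjc_real -scalemxAl scale_col_mx; case/eq_col_mx => Eu1 Eu2.
move: normU; rewrite ctr_col_mx mul_row_col => normU.
have := gramUV; rewrite !ctr_row_mx !mul_col_row => /eq_block_mx[norm1 _ _ norm2].
have relation_trivial (c : 'cV[R[i]]_(1 + 1)) :
    row_mx u1 u2 *m c = 0 -> row_mx v1 v2 *m c = 0 -> c = 0.
  rewrite !mul_row_mx2 => rel_u rel_v.
  have [c1_0 c2_0] := pair_relation_trivial dD dd_unit gs_gt0 Ev1 Ev2 Eu1 Eu2
    norm1 norm2 normU rel_u rel_v.
  exact: cV2_eq0 c1_0 c2_0.
split; apply: mxrank_inj_cols => c Xc; apply: relation_trivial => //.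
- exact: gram_eq_mulmx_eq0 gramUV Xc.
- exact: gram_eq_mulmx_eq0 (esym gramUV) Xc.
Qed.
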